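(* Let $T:X\rightrightarrows X^*$ be a multivalued operator. Then $Z_{T^\rho}$ is a weakly closed convex subset of $X$, and $Z_{T^\mu}=Z_{T^\rho}$.
   Context: $X$ is a real Banach space with dual $X^*$ and pairing $\langle x,x^*\rangle=x^*(x)$. A multivalued operator $T:X\rightrightarrows X^*$ is identified with its graph $T\subset X\times X^*$, and $T(x)=\{x^*:(x,x^* )\in T\}$. The set of zeros of $T$ is $Z_T=\{x\in X: 0\in T(x)\}$. For $(x,x^* ),(y,y^* )\in X\times X^*$, write $(x,x^* )\sim_p(y,y^* )$ if either $\min\{\langle x-y,y^*\rangle,\langle y-x,x^*\rangle\}<0$ or $\langle x-y,y^*\rangle=\langle y-x,x^*\rangle=0$. The pseudomonotone polar of $T$ is $T^\rho=\{(x,x^* )\in X\times X^*: (x,x^* )\sim_p(y,y^* )\ \forall (y,y^* )\in T\}$. The monotone polar of $T$ is $T^\mu=\{(x,x^* )\in X\times X^*: \langle x-y,x^*-y^*\rangle\ge 0\ \forall (y,y^* )\in T\}$. *)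

From Stdlib Require Import Reals Lra List.
Open Scope R_scope.

Record BanachSpace := {
  carrier :> Type;
  vzero : carrier;
  vadd : carrier -> carrier -> carrier;
  vopp : carrier -> carrier;
  vscal : R -> carrier -> carrier;
  vnorm : carrier -> R;
  vadd_assoc : forall x y z, vadd x (vadd y z) = vadd (vadd x y) z;
  vadd_comm : forall x y, vadd x y = vadd y x;
  vadd_0 : forall x, vadd x vzero = x;
  vadd_opp : forall x, vadd x (vopp x) = vzero;
  vscal_assoc : forall a b x, vscal a (vscal b x) = vscal (a * b) x;
  vscal_1 : forall x, vscal 1 x = x;
  vscal_distr_v : forall a x y, vscal a (vadd x y) = vadd (vscal a x) (vscal a y);
  vscal_distr_r : forall a b x, vscal (a + b) x = vadd (vscal a x) (vscal b x);
  vnorm_nonneg : forall x, 0 <= vnorm x;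
  vnorm_eq0 : forall x, vnorm x = 0 -> x = vzero;
  vnorm_scal : forall a x, vnorm (vscal a x) = Rabs a * vnorm x;
  vnorm_triangle : forall x y, vnorm (vadd x y) <= vnorm x + vnorm y;
  vcomplete : forall u : nat -> carrier,
    (forall eps, eps > 0 -> exists N, forall n m, (n >= N)%nat -> (m >= N)%nat ->
        vnorm (vadd (u n) (vopp (u m))) < eps) ->
    exists l, forall eps, eps > 0 -> exists N, forall n, (n >= N)%nat ->
        vnorm (vadd (u n) (vopp l)) < eps
}.

Definition vsub {X : BanachSpace} (x y : X) : X := vadd X x (vopp X y).

Record dual (X : BanachSpace) := {
  dfun :> X -> R;
  dfun_add : forall x y, dfun (vadd X x y) = dfun x + dfun y;
  dfun_scal : forall a x, dfun (vscal X a x) = a * dfun x;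
  dfun_bounded : exists M, forall x, Rabs (dfun x) <= M * vnorm X x
}.
Arguments dfun {X} _ _.

Definition pairing {X : BanachSpace} (x : X) (xs : dual X) : R := dfun xs x.

Program Definition dual0 (X : BanachSpace) : dual X :=
  {| dfun := fun _ => 0 |}.
Next Obligation. lra. Qed.
Next Obligation. lra. Qed.
Next Obligation. exists 0; intros x; rewrite Rabs_R0; lra. Qed.

Program Definition dsub {X : BanachSpace} (f g : dual X) : dual X :=
  {| dfun := fun x => dfun f x - dfun g x |}.
Next Obligation. rewrite !dfun_add; lra. Qed.
Next Obligation. rewrite !dfun_scal; lra. Qed.
Next Obligation.
  destruct (dfun_bounded X f) as [M1 H1]; destruct (dfun_bounded X g) as [M2 H2].
  exists (M1 + M2); intros x.
  specialize (H1 x); specialize (H2 x).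
  eapply Rle_trans; [apply Rabs_triang|]. rewrite Rabs_Ropp. lra.
Qed.

Definition operator (X : BanachSpace) := X -> dual X -> Prop.

Definition zeros {X : BanachSpace} (T : operator X) : X -> Prop :=
  fun x => T x (dual0 X).

Definition psim {X : BanachSpace} (x : X) (xs : dual X) (y : X) (ys : dual X) : Prop :=
  Rmin (pairing (vsub x y) ys) (pairing (vsub y x) xs) < 0 \/
  (pairing (vsub x y) ys = 0 /\ pairing (vsub y x) xs = 0).

Definition pm_polar {X : BanachSpace} (T : operator X) : operator X :=
  fun x xs => forall y ys, T y ys -> psim x xs y ys.

Definition mono_polar {X : BanachSpace} (T : operator X) : operator X :=
  fun x xs => forall y ys, T y ys -> pairing (vsub x y) (dsub xs ys) >= 0.

Definition convex_set {X : BanachSpace} (C : X -> Prop) : Prop :=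
  forall x y t, C x -> C y -> 0 <= t <= 1 ->
    C (vadd X (vscal X t x) (vscal X (1 - t) y)).

Definition weakly_open {X : BanachSpace} (U : X -> Prop) : Prop :=
  forall x, U x -> exists (fs : list (dual X)) (eps : R), eps > 0 /\
    forall z, (forall f, In f fs -> Rabs (pairing (vsub z x) f) < eps) -> U z.

Definition weakly_closed {X : BanachSpace} (C : X -> Prop) : Prop :=
  weakly_open (fun x => ~ C x).

(* Both polars have the same zeros: x is a zero of either one exactly when
   g x <= g y for every pair (y, g) in the graph of T.  The zeros are therefore
   an intersection of closed half-spaces {x | f x <= c} with f in the dual, and
   such an intersection is convex and weakly closed. *)
From Stdlib Require Import Reals List Lra Classical.
Open Scope R_scope.

Lemma dual_at_zero (X : BanachSpace) (f : dual X) : f (vzero X) = 0.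
Proof.
  assert (H := dfun_add X f (vzero X) (vzero X)).
  rewrite vadd_0 in H. lra.
Qed.

Lemma pairing_sub (X : BanachSpace) (x y : X) (f : dual X) :
  pairing (vsub x y) f = f x - f y.
Proof.
  unfold pairing, vsub. rewrite dfun_add.
  assert (H := dfun_add X f y (vopp X y)).
  rewrite vadd_opp, dual_at_zero in H. lra.
Qed.

Section HalfspaceMeet.

Variable X : BanachSpace.
Variable P : dual X -> R -> Prop.
Variable C : X -> Prop.
Hypothesis C_halfspaces : forall x, C x <-> forall f c, P f c -> f x <= c.

Lemma weakly_closed_halfspace_meet : weakly_closed C.
Proof.
  intros x Hx.
  assert (Hsep : exists f c, P f c /\ f x > c).
  { apply NNPP; intro Hno; apply Hx, C_halfspaces; intros f c Hfc.
    apply Rnot_gt_le; intro Hgt; apply Hno; now exists f, c. }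
  destruct Hsep as [f [c [Hfc Hgt]]].
  exists (f :: nil), (f x - c); split; [lra|].
  intros z Hnear Hz.
  specialize (Hnear f (or_introl eq_refl)).
  rewrite pairing_sub in Hnear; apply Rabs_def2 in Hnear.
  apply C_halfspaces with (f := f) (c := c) in Hz; [lra | exact Hfc].
Qed.

Lemma convex_halfspace_meet : convex_set C.
Proof.
  intros x y t Hx Hy Ht.
  apply C_halfspaces; intros f c Hfc.
  apply C_halfspaces with (f := f) (c := c) in Hx, Hy; try exact Hfc.
  rewrite dfun_add, !dfun_scal. nra.
Qed.

End HalfspaceMeet.

Lemma zeros_pm_polarE (X : BanachSpace) (T : operator X) (x : X) :
  zeros (pm_polar T) x <-> forall y ys, T y ys -> ys x <= ys y.
Proof.
  unfold zeros, pm_polar, psim; split; intros H y ys Hy; specialize (H y ys Hy);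
    rewrite !pairing_sub in *; simpl in *; unfold Rmin in *.
  - destruct H as [H | [H _]]; [destruct (Rle_dec _ _) |]; lra.
  - destruct (Rle_lt_or_eq_dec _ _ H); [left | right]; [destruct (Rle_dec _ _) |]; lra.
Qed.

Lemma zeros_mono_polarE (X : BanachSpace) (T : operator X) (x : X) :
  zeros (mono_polar T) x <-> forall y ys, T y ys -> ys x <= ys y.
Proof.
  unfold zeros, mono_polar; split; intros H y ys Hy; specialize (H y ys Hy);
    rewrite pairing_sub in *; simpl in *; lra.
Qed.

Theorem mainTheorem2 (X : BanachSpace) (T : operator X) :
  weakly_closed (zeros (pm_polar T)) /\ convex_set (zeros (pm_polar T)) /\
  (forall x, zeros (mono_polar T) x <-> zeros (pm_polar T) x).
Proof.
  set (P := fun (f : dual X) c => exists y, T y f /\ c = f y).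
  assert (Hmeet : forall x, zeros (pm_polar T) x <-> forall f c, P f c -> f x <= c).
  { intro x; rewrite zeros_pm_polarE; split.
    - intros H f c [y [Hy ->]]; exact (H y f Hy).
    - intros H y ys Hy; apply H; now exists y. }
  split; [| split].
  - exact (weakly_closed_halfspace_meet X P _ Hmeet).
  - exact (convex_halfspace_meet X P _ Hmeet).
  - intro x; now rewrite zeros_mono_polarE, zeros_pm_polarE.
Qed.
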